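(* Let $f(z)=\sum_{n\ge1} f_n z^n$ be a formal power series over $\mathbb{C}$ with $f_1\neq 0$ such that $-f(z)$ has compositional order exactly $2$, i.e. $-f(-f(z))=z$ and $-f(z)\neq z$. Then the set $\{g(z)\in F_0[[z]] : (g(z),f(z)) \text{ is a pseudo-involution}\}$ is an infinite subgroup of the multiplicative group $F_0[[z]]$.
   Context: $F_0[[z]]$ denotes the set of formal power series over $\mathbb{C}$ with nonzero constant term, which is a group under multiplication of power series. A Riordan matrix is a pair $(g(z),f(z))$ of formal power series over $\mathbb{C}$ with $g(z)=\sum_{n\ge 0} g_n z^n$, $g_0\neq 0$, and $f(z)=\sum_{n\ge 1} f_n z^n$ with $f_1\neq 0$; it represents the infinite lower-triangular matrix whose $k$-th column ($k\ge 0$) has generating function $g(z)f(z)^k$. Riordan matrices form a group under matrix multiplication, where $(g(z),f(z))*(h(z),l(z))=(g(z)h(f(z)),\,l(f(z)))$ and the identity is $(1,z)$. Let $M=(1,-z)$. A Riordan matrix $L$ is called a pseudo-involution if $(L*M)*(L*M)=(1,z)$. *)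

From mathcomp Require Import all_boot all_algebra.
From mathcomp Require Import complex.
From mathcomp Require Import Rstruct.
Set Implicit Arguments. Unset Strict Implicit. Unset Printing Implicit Defensive.
Import GRing.Theory.
Local Open Scope ring_scope.

Definition C : fieldType := (Rdefinitions.R)[i].

Definition fps := nat -> C.

Definition fps_one : fps := fun n => (n == 0)%:R.
Definition fps_X : fps := fun n => (n == 1)%:R.
Definition fps_opp (a : fps) : fps := fun n => - a n.
Definition fps_mul (a b : fps) : fps :=
  fun n => \sum_(i < n.+1) a i * b (n - i)%N.
Definition fps_pow (a : fps) (k : nat) : fps := iter k (fps_mul a) fps_one.
(* composition g(f(z)); meaningful when f 0 = 0 (then f^k has order >= k) *)
Definition fps_comp (g f : fps) : fps :=
  fun n => \sum_(k < n.+1) g k * fps_pow f k n.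

Definition in_F0 (g : fps) : Prop := g 0%N != 0.

Definition is_riordan (L : fps * fps) : Prop :=
  L.1 0%N != 0 /\ L.2 0%N = 0 /\ L.2 1%N != 0.

Definition riordan_mul (L K : fps * fps) : fps * fps :=
  (fps_mul L.1 (fps_comp K.1 L.2), fps_comp K.2 L.2).

Definition riordan_id : fps * fps := (fps_one, fps_X).
Definition riordan_M : fps * fps := (fps_one, fps_opp fps_X).

Definition pseudo_involution (L : fps * fps) : Prop :=
  is_riordan L /\
  riordan_mul (riordan_mul L riordan_M) (riordan_mul L riordan_M) = riordan_id.

Definition PI_set (f : fps) (g : fps) : Prop :=
  in_F0 g /\ pseudo_involution (g, f).

From mathcomp Require Import all_boot all_algebra.
From mathcomp Require Import complex Rstruct.
From Stdlib Require Import FunctionalExtensionality Classical.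
From mathcomp Require Import zify.
Import GRing.Theory Num.Theory.
Local Open Scope ring_scope.

(* Proof of theorem25.  Write phi := -f, so that phi \o phi = z.

   1. Formal power series are compared through their truncations to
      polynomials of degree <= n: truncation commutes with product and
      (for h(0) = 0) with composition, up to degree n.  This transfers the
      polynomial identities of MathComp to [fps]: product is commutative,
      associative and unital, composition with h is multiplicative and
      composition is associative.
   2. Since (L*M) = (g, phi), the pair (g, f) is a pseudo-involution iff
      g(0) <> 0 and the "twist" g * (g \o phi) equals 1.  The twist is
      multiplicative, hence the solutions form a subgroup.
   3. For c in C, g_c := (1 + c z) * ((1 + c z)^-1 \o phi) is a solution,
      because twisting is invariant under r |-> r \o phi.  Its coefficient
      of z is c (1 - phi_1), and phi_1 <> 1 because an involution tangent to
      the identity is the identity.  Hence n |-> g_n is injective. *)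

Definition eq_upto (n : nat) (p q : {poly C}) := forall i, (i <= n)%N -> p`_i = q`_i.

Lemma eq_upto_sym {n p q} : eq_upto n p q -> eq_upto n q p.
Proof. by move=> H i Hi; rewrite H. Qed.

Lemma eq_upto_trans {n p q r} : eq_upto n p q -> eq_upto n q r -> eq_upto n p r.
Proof. by move=> H1 H2 i Hi; rewrite H1 // H2. Qed.

Lemma eq_upto_mul {n p q p' q'} :
  eq_upto n p p' -> eq_upto n q q' -> eq_upto n (p * q) (p' * q').
Proof.
move=> H1 H2 i Hi; rewrite !coefM; apply: eq_bigr => [[j /= Hj]] _.
by rewrite H1 ?H2 //; lia.
Qed.

Lemma eq_upto_exp {n p p'} k : eq_upto n p p' -> eq_upto n (p ^+ k) (p' ^+ k).
Proof.
move=> H; elim: k => [|k IH]; first by rewrite !expr0.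
by rewrite !exprS; apply: eq_upto_mul.
Qed.

Lemma coef_exp_low (q : {poly C}) k j : q`_0 = 0 -> (j < k)%N -> (q ^+ k)`_j = 0.
Proof.
move=> q0; elim: k j => [|k IH] j //= Hj.
rewrite exprS coefM big1 // => [[[|a] Ha]] _ /=; first by rewrite q0 mul0r.
by rewrite IH ?mulr0 //; lia.
Qed.

Lemma coef_comp_bound (p q : {poly C}) N i : (size p <= N)%N ->
  (p \Po q)`_i = \sum_(k < N) p`_k * (q ^+ k)`_i.
Proof.
move=> HN; rewrite coef_comp_poly (big_ord_widen N (fun k => p`_k * (q ^+ k)`_i)) //.
rewrite big_mkcond; apply: eq_bigr => k _; case: ifP => // /negbT.
by rewrite -leqNgt => H; rewrite nth_default // mul0r.
Qed.

Lemma eq_upto_comp {n} {p p' q q' : {poly C}} : q`_0 = 0 ->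
  eq_upto n p p' -> eq_upto n q q' -> eq_upto n (p \Po q) (p' \Po q').
Proof.
move=> q0 Hp Hq; apply: (@eq_upto_trans _ _ (p' \Po q)) => i Hi.
  rewrite (@coef_comp_bound p q _ i (leq_maxl (size p) (size p'))).
  rewrite (@coef_comp_bound p' q _ i (leq_maxr (size p) (size p'))).
  apply: eq_bigr => k _; case: (leqP k i) => Hk; last by rewrite coef_exp_low ?mulr0.
  by rewrite Hp //; apply: leq_trans Hi.
by rewrite !coef_comp_poly; apply: eq_bigr => k _; rewrite (eq_upto_exp k Hq).
Qed.

Definition trunc (n : nat) (a : fps) : {poly C} := \poly_(i < n.+1) a i.

Lemma coef_trunc n a i : (trunc n a)`_i = if (i <= n)%N then a i else 0.
Proof. by rewrite coef_poly ltnS. Qed.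

Lemma fps_ext (a b : fps) : (forall n, eq_upto n (trunc n a) (trunc n b)) -> a = b.
Proof.
move=> H; apply: functional_extensionality => m.
by have := H m m (leqnn m); rewrite !coef_trunc leqnn.
Qed.

Lemma trunc_one n : trunc n fps_one = 1.
Proof. by apply/polyP => -[|i]; rewrite coef_trunc coef1 //=; case: ifP. Qed.

Lemma trunc_X n : eq_upto n (trunc n fps_X) 'X.
Proof. by move=> i Hi; rewrite coef_trunc Hi coefX. Qed.

Lemma trunc_opp n a : trunc n (fps_opp a) = - trunc n a.
Proof. by apply/polyP => i; rewrite coefN !coef_trunc; case: ifP; rewrite ?oppr0. Qed.

Lemma trunc_mul n a b : eq_upto n (trunc n (fps_mul a b)) (trunc n a * trunc n b).
Proof.
move=> m Hm; rewrite coef_trunc Hm coefM; apply: eq_bigr => [[j /= Hj]] _.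
by rewrite !coef_trunc !ifT //; lia.
Qed.

Lemma coef_trunc_pow n a k m : (m <= n)%N -> fps_pow a k m = ((trunc n a) ^+ k)`_m.
Proof.
elim: k m => [|k IH] m Hm; first by rewrite expr0 coef1.
rewrite exprS coefM; apply: eq_bigr => [[j /= Hj]] _.
by rewrite coef_trunc ifT -?IH //; lia.
Qed.

Lemma trunc_comp {n} g {h} : h 0%N = 0 ->
  eq_upto n (trunc n (fps_comp g h)) (trunc n g \Po trunc n h).
Proof.
move=> h0 m Hm; rewrite coef_trunc Hm.
rewrite (@coef_comp_bound _ (trunc n h) n.+1 m (size_poly _ _)).
rewrite /fps_comp (big_ord_widen n.+1 (fun k => g k * fps_pow h k m)) ?ltnS //.
rewrite big_mkcond; apply: eq_bigr => [[k /= Hk]] _; case: ifP => Hkm.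
  by rewrite coef_trunc ifT -?coef_trunc_pow //; lia.
by rewrite coef_exp_low ?mulr0 ?coef_trunc ?h0 //; lia.
Qed.

Lemma fps_mulC a b : fps_mul a b = fps_mul b a.
Proof.
apply: fps_ext => n; apply: eq_upto_trans (trunc_mul _ _ _) _.
by rewrite mulrC; apply: eq_upto_sym; apply: trunc_mul.
Qed.

Lemma fps_mulA a b c : fps_mul a (fps_mul b c) = fps_mul (fps_mul a b) c.
Proof.
apply: fps_ext => n.
apply: eq_upto_trans (trunc_mul _ _ _) _.
apply: eq_upto_trans (eq_upto_mul (fun _ _ => erefl) (trunc_mul _ _ _)) _.
apply: eq_upto_sym; apply: eq_upto_trans (trunc_mul _ _ _) _.
apply: eq_upto_trans (eq_upto_mul (trunc_mul _ _ _) (fun _ _ => erefl)) _.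
by rewrite mulrA.
Qed.

Lemma fps_mul1 a : fps_mul fps_one a = a.
Proof.
by apply: fps_ext => n; apply: eq_upto_trans (trunc_mul _ _ _) _; rewrite trunc_one mul1r.
Qed.

Lemma fps_mulr1 a : fps_mul a fps_one = a.
Proof. by rewrite fps_mulC fps_mul1. Qed.

Lemma fps_comp0 g h : fps_comp g h 0%N = g 0%N.
Proof. by rewrite /fps_comp big_ord1 /= /fps_one /= mulr1. Qed.

Lemma fps_comp1 h : h 0%N = 0 -> fps_comp fps_one h = fps_one.
Proof.
move=> h0; apply: fps_ext => n; apply: eq_upto_trans (trunc_comp _ h0) _.
by rewrite trunc_one -polyC1 comp_polyC.
Qed.

Lemma fps_compXr a : fps_comp a fps_X = a.
Proof.
apply: fps_ext => n; apply: eq_upto_trans (trunc_comp _ (erefl : fps_X 0%N = 0)) _.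
rewrite -[trunc n a]comp_polyXr.
by apply: eq_upto_comp (trunc_X n) => [|i _]; rewrite ?comp_polyXr ?coef_trunc.
Qed.

(* Composing -z with f gives -f: this computes L * M = (g, -f). *)
Lemma fps_compNX f : f 0%N = 0 -> fps_comp (fps_opp fps_X) f = fps_opp f.
Proof.
move=> f0; apply: fps_ext => n; apply: eq_upto_trans (trunc_comp _ f0) _.
have f0n : (trunc n f)`_0 = 0 by rewrite coef_trunc.
have NX : eq_upto n (- trunc n fps_X) (- 'X) by move=> i Hi; rewrite !coefN trunc_X.
rewrite !trunc_opp; apply: eq_upto_trans (eq_upto_comp f0n NX (fun _ _ => erefl)) _.
by move=> i _; rewrite -scaleN1r comp_polyZ comp_polyX scaleN1r.
Qed.

Lemma fps_compM a b h : h 0%N = 0 ->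
  fps_comp (fps_mul a b) h = fps_mul (fps_comp a h) (fps_comp b h).
Proof.
move=> h0; apply: fps_ext => n; have hn0 : (trunc n h)`_0 = 0 by rewrite coef_trunc.
apply: eq_upto_trans (trunc_comp _ h0) _.
apply: eq_upto_trans (eq_upto_comp hn0 (trunc_mul _ _ _) (fun _ _ => erefl)) _.
rewrite comp_polyM; apply: eq_upto_sym; apply: eq_upto_trans (trunc_mul _ _ _) _.
by apply: eq_upto_mul; apply: trunc_comp.
Qed.

Lemma fps_compA a h k : h 0%N = 0 -> k 0%N = 0 ->
  fps_comp (fps_comp a h) k = fps_comp a (fps_comp h k).
Proof.
move=> h0 k0; have hk0 : fps_comp h k 0%N = 0 by rewrite fps_comp0.
apply: fps_ext => n; have kn0 : (trunc n k)`_0 = 0 by rewrite coef_trunc.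
apply: eq_upto_trans (trunc_comp _ k0) _.
apply: eq_upto_trans (eq_upto_comp kn0 (trunc_comp _ h0) (fun _ _ => erefl)) _.
rewrite -comp_polyA; apply: eq_upto_sym; apply: eq_upto_trans (trunc_comp _ hk0) _.
apply: eq_upto_comp => //; last exact: trunc_comp.
by rewrite coef_trunc.
Qed.

(* The twist g * (g \o phi); for phi = -f its fixed points at 1 are the
   solutions of the pseudo-involution equation. *)
Definition twist (phi g : fps) : fps := fps_mul g (fps_comp g phi).

Section Twist.
Variable phi : fps.
Hypothesis phi0 : phi 0%N = 0.

Lemma twist1 : twist phi fps_one = fps_one.
Proof. by rewrite /twist fps_comp1 // fps_mul1. Qed.

Lemma twistM g h : twist phi (fps_mul g h) = fps_mul (twist phi g) (twist phi h).
Proof.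
rewrite /twist fps_compM // -!fps_mulA; congr fps_mul.
by rewrite fps_mulC -fps_mulA; congr fps_mul; rewrite fps_mulC.
Qed.

Lemma twist_comp r : fps_comp phi phi = fps_X ->
  twist phi (fps_comp r phi) = twist phi r.
Proof. by move=> Hphi; rewrite /twist fps_compA // Hphi fps_compXr fps_mulC. Qed.

End Twist.

(* With phi = -f an involution, L * M = (g, phi), so (g, f) is a
   pseudo-involution exactly when g is invertible with twist 1. *)
Lemma PI_set_twist f g : f 0%N = 0 -> f 1%N != 0 ->
  fps_comp (fps_opp f) (fps_opp f) = fps_X ->
  PI_set f g <-> in_F0 g /\ twist (fps_opp f) g = fps_one.
Proof.
move=> f0 f1 Hinv; rewrite /PI_set /pseudo_involution.
have -> : riordan_mul (g, f) riordan_M = (g, fps_opp f).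
  by rewrite /riordan_mul /= fps_comp1 // fps_mulr1 fps_compNX.
rewrite /riordan_mul /= Hinv /riordan_id /is_riordan /twist /=.
by split=> [[g0 [_ [->]]] | [g0 ->]].
Qed.

Lemma fps_mul_coef0 a b : fps_mul a b 0%N = a 0%N * b 0%N.
Proof. by rewrite /fps_mul big_ord1. Qed.

Lemma fps_mul_coef1 a b : fps_mul a b 1%N = a 0%N * b 1%N + a 1%N * b 0%N.
Proof. by rewrite /fps_mul !big_ord_recr big_ord0 /= add0r. Qed.

Lemma fps_comp_coef1 g h : h 0%N = 0 -> fps_comp g h 1%N = g 1%N * h 1%N.
Proof.
move=> h0; rewrite /fps_comp !big_ord_recr big_ord0 /= add0r.
by rewrite /fps_pow /= fps_mulr1 /fps_one /= mulr0 add0r.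
Qed.

Lemma coef_comp_tangent (a : C) k (P := 'X + a *: 'X^(k.+2) : {poly C}) :
  (P \Po P)`_k.+2 = a *+ 2.
Proof.
have Pm : P`_k.+2 = a by rewrite coefD coefZ coefXn coefX eqxx mulr1 add0r.
have Pk : (P ^+ k.+2)`_k.+2 = 1.
  have -> : P = 'X * (1 + a *: 'X^(k.+1)).
    by rewrite mulrDr mulr1 -scalerAr -exprS.
  rewrite exprMn coefXnM ltnn subnn.
  elim: k.+2 => [|j IH]; first by rewrite expr0 coef1.
  by rewrite exprS coef0M IH coefD coef1 coefZ coefXn mulr0 addr0 mulr1.
by rewrite comp_polyD comp_polyX comp_polyZ comp_Xn_poly coefD coefZ Pm Pk mulr1.
Qed.

Lemma involution_tangent_id (phi : fps) : phi 0%N = 0 ->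
  fps_comp phi phi = fps_X -> phi <> fps_X -> phi 1%N != 1.
Proof.
move=> phi0 Hinv Hne; apply/negP => /eqP phi1.
have Hex : exists m, phi m != fps_X m.
  apply/not_all_not_ex => H; apply: Hne; apply: functional_extensionality => m.
  by have := H m; case: eqP.
case: (ex_minnP Hex) => -[|[|k]] Hm Hmin; rewrite ?phi0 ?phi1 ?eqxx // in Hm.
have Hlow i : (i < k.+2)%N -> phi i = fps_X i.
  by move=> Hi; apply/eqP/negPn/negP => /Hmin; rewrite leqNgt Hi.
have Htr : trunc k.+2 phi = 'X + phi k.+2 *: 'X^(k.+2).
  apply/polyP => i; rewrite coef_trunc coefD coefZ coefXn coefX.
  case: (ltngtP i k.+2) => [Hi|Hi|->]; rewrite ?mulr0 ?mulr1 ?addr0 ?add0r //.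
  - by rewrite Hlow.
  - by case: i Hi => [|[|i]].
have := trunc_comp phi phi0 k.+2 (leqnn k.+2).
rewrite Hinv Htr coef_comp_tangent coef_trunc leqnn /fps_X /= => /eqP.
by rewrite eq_sym /C mulrn_eq0 (negPf Hm).
Qed.

Definition lin (c : C) : fps := fun k => (k == 0)%:R + c * (k == 1)%:R.
(* (1 + c z)^-1 = sum_k (-c)^k z^k *)
Definition geom (c : C) : fps := fun k => (- c) ^+ k.
Definition gfam (phi : fps) (c : C) : fps := fps_mul (lin c) (fps_comp (geom c) phi).

Lemma lin_geom c : fps_mul (lin c) (geom c) = fps_one.
Proof.
apply: functional_extensionality => -[|n].
  by rewrite fps_mul_coef0 /lin /geom /= mulr0 addr0 mul1r.
rewrite /fps_mul !big_ord_recl big1 => [|i _]; last by rewrite /lin mulr0 addr0 mul0r.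
rewrite /lin /geom /= subn1 subn0 /= !(mulr0, addr0, add0r, mul1r, mulr1).
by rewrite exprS mulNr addNr /fps_one.
Qed.

(* twist(a * (r \o phi)) = twist(a * r) = twist 1 = 1. *)
Lemma gfam_twist phi c : phi 0%N = 0 -> fps_comp phi phi = fps_X ->
  twist phi (gfam phi c) = fps_one.
Proof.
move=> phi0 Hinv.
by rewrite /gfam twistM // twist_comp // -twistM // lin_geom twist1.
Qed.

(* g_c is invertible, and its coefficient of z determines c when phi_1 <> 1. *)
Lemma gfam_coef0 phi c : gfam phi c 0%N = 1.
Proof. by rewrite /gfam fps_mul_coef0 fps_comp0 /lin /geom /= mulr0 addr0 mul1r. Qed.

Lemma gfam_coef1 phi c : phi 0%N = 0 -> gfam phi c 1%N = c * (1 - phi 1%N).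
Proof.
move=> phi0; rewrite /gfam fps_mul_coef1 fps_comp_coef1 // fps_comp0 /lin /geom /=.
by rewrite !(mulr0, addr0, add0r, mul1r, mulr1, expr0, expr1) mulrBr mulr1 mulNr addrC.
Qed.

Theorem theorem25 (f : fps) :
  f 0%N = 0 -> f 1%N != 0 ->
  fps_comp (fps_opp f) (fps_opp f) = fps_X ->
  fps_opp f <> fps_X ->
  (* subgroup of the multiplicative group F_0[[z]] *)
  [/\ PI_set f fps_one,
      (forall g h, PI_set f g -> PI_set f h -> PI_set f (fps_mul g h)),
      (forall g h, PI_set f g -> fps_mul g h = fps_one -> PI_set f h)
    & (* infinite *)
      exists u : nat -> fps, injective u /\ forall n, PI_set f (u n)].
Proof.
move=> f0 f1 Hinv Hne; set phi := fps_opp f.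
have phi0 : phi 0%N = 0 by rewrite /phi /fps_opp f0 oppr0.
have PIE g := PI_set_twist f g f0 f1 Hinv; rewrite /in_F0 in PIE.
split.
- by apply/PIE; rewrite twist1 // oner_neq0.
- move=> g h /PIE [g0 Hg] /PIE [h0 Hh]; apply/PIE.
  by rewrite fps_mul_coef0 mulf_neq0 // twistM // Hg Hh fps_mul1.
- move=> g h /PIE [g0 Hg] Hgh; apply/PIE; split.
    apply: contra_neq (oner_neq0 C) => h0.
    by rewrite -[1]/(fps_one 0%N) -Hgh fps_mul_coef0 h0 mulr0.
  by rewrite -[twist _ h]fps_mul1 -Hg -twistM // Hgh twist1.
- have phi1 : 1 - phi 1%N != 0 by rewrite subr_eq0 eq_sym involution_tangent_id.
  exists (fun n => gfam phi n%:R); split.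
    move=> m n /(congr1 (fun a => a 1%N)); rewrite /= !gfam_coef1 // => /(mulIf phi1).
    by move/eqP; rewrite /C eqr_nat => /eqP.
  by move=> n; apply/PIE; rewrite gfam_coef0 gfam_twist ?oner_neq0.
Qed.
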